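(* Let $R$ be a finite group which is neither an abelian group of exponent greater than $2$ nor a generalized dicyclic group. Then the set $$\{S\subseteq R\mid S=S^{-1},\ R<N_{\mathrm{Aut}(\Gamma(R,S))}(R)\}$$ has cardinality at most $2^{\mathbf{c}(R)-|R|/96+(\log_2|R|)^2}$.
   Context: $\mathbf{I}(R)=\{x\in R\mid x^2=1\}$, $\mathbf{c}(R)=(|R|+|\mathbf{I}(R)|)/2$. The Cayley digraph $\Gamma(R,S)$ has vertex set $R$ and an arc $(g,h)$ iff $hg^{-1}\in S$; $R$ is identified with its right regular representation inside $\mathrm{Aut}(\Gamma(R,S))$, and $N_{\mathrm{Aut}(\Gamma(R,S))}(R)$ is its normalizer. Generalized dicyclic group: for $A$ abelian of even order and exponent $>2$ and $y$ an involution of $A$, $\mathrm{Dic}(A,y,x)=\langle A,x\mid x^2=y,\ x^{-1}ax=a^{-1}\ \forall a\in A\rangle$; a group is generalized dicyclic if isomorphic to some such group. *)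

From HB Require Import structures.
From Stdlib Require Import Reals.
From mathcomp Require Import all_boot all_order all_fingroup all_solvable.
Set Implicit Arguments. Unset Strict Implicit. Unset Printing Implicit Defensive.
Import GroupScope.

Definition rreg (gT : finGroupType) (x : gT) : {perm gT} := perm (mulIg x).

(* The image of R (= the whole group gT) under the right regular representation. *)
Definition rregR (gT : finGroupType) : {set {perm gT}} := [set rreg x | x : gT].

(* Aut(Gamma(R,S)): permutations of the vertex set R preserving arcs and
   non-arcs, where (g,h) is an arc iff h g^-1 \in S. *)
Definition CayAut (gT : finGroupType) (S : {set gT}) : {set {perm gT}} :=
  [set s : {perm gT} | [forall g : gT, forall h : gT,
      (h * g^-1 \in S) == (s h * (s g)^-1 \in S)]].

Definition invol_set (gT : finGroupType) : {set gT} := [set x : gT | x ^+ 2 == 1].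
Definition cR (gT : finGroupType) : R :=
  Rdiv (INR (#|[set: gT]| + #|invol_set gT|)%N) 2.

Definition abelian_exp_gt2 (gT : finGroupType) : bool :=
  abelian [set: gT] && (2 < exponent [set: gT])%N.

(* Generalized dicyclic: R has an abelian subgroup A of index 2 and exponent > 2,
   and an element x outside A with x^2 an involution of A and x^-1 a x = a^-1
   for all a in A.  (Intrinsic form of R ~= Dic(A, y, x), y = x^2.) *)
Definition gen_dicyclic (gT : finGroupType) : Prop :=
  exists (A : {group gT}) (x : gT),
    [/\ abelian A, #|[set: gT] : A| = 2%N, (2 < exponent A)%N, x \notin A
        & [/\ x ^+ 2 \in A, #[x ^+ 2] = 2%N &
             forall a, a \in A -> a ^ x = a^-1]].

Definition bad_sets (gT : finGroupType) : {set {set gT}} :=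
  [set S : {set gT} | (S^-1 == S) && (rregR gT \proper 'N_(CayAut S)(rregR gT))].

(* A set S of the family is invariant under a nontrivial automorphism: if s
   normalises the right regular representation without belonging to it, then s
   followed by right translation by s(1)^-1 is an automorphism a <> 1 that
   preserves S.  An inverse-closed a-invariant S is a union of orbits of the
   group generated by a and inversion, so it is determined by its trace on the
   set M of orbit minima.  M lies in T = {x | x <= x^-1} (for a fixed ordering),
   and |T| = c(R); moreover x |-> (a x or (a x)^-1, whichever is in T) maps
   the points of M in D(a) = {x | a x <> x, x^-1} injectively to points of T
   outside M, so |M| <= c(R) - |D(a)|/4.
   The heart of the matter is |D(a)| >= |R|/24.  Otherwise the set W of points
   that are fixed by a, or inverted by a while inverting the fixed subgroup A
   by conjugation, covers more than 5/6 of R: for z outside W, a 3/4-inversion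
   argument shows that a quarter of the coset zA lies in D(a).  If |R : A| = 2
   this makes R abelian of exponent > 2 or generalized dicyclic; if
   |R : A| >= 3, then W \ A is central and R is abelian of exponent > 2.
   Finally an automorphism is determined by its values on a generating
   sequence built greedily, of length d with 2^d <= |R|, whence
   |Aut R| <= |R|^d <= 2^((log2 |R|)^2). *)

From HB Require Import structures.
From Stdlib Require Import Reals Lra.
From mathcomp Require Import all_boot all_order all_fingroup all_solvable.
From mathcomp Require Import zify.
Set Implicit Arguments. Unset Strict Implicit. Unset Printing Implicit Defensive.
Local Open Scope group_scope.

(* [lia] treats two occurrences of [#|A|] whose finType instances agree only up
   to conversion as distinct atoms; [set] identifies them first. *)
Ltac card_lia :=
  repeat match goal with |- context [#|?A|] =>
    let k := fresh "k" in set k := #|A|; clearbody k end;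
  first [lia | nia].

Lemma card_setI_lb (T : finType) (X Y Z : {set T}) :
  X \subset Z -> Y \subset Z -> #|X| + #|Y| <= #|X :&: Y| + #|Z|.
Proof.
move=> sXZ sYZ; rewrite -cardsUI addnC leq_add2l.
by apply: subset_leq_card; rewrite subUset sXZ sYZ.
Qed.

Lemma card_bigcup_le (T I : finType) (P : {pred I}) (F : I -> {set T}) :
  #|\bigcup_(i in P) F i| <= \sum_(i in P) #|F i|.
Proof.
elim/big_rec2: _ => [|i n U _ IH]; first by rewrite cards0.
by apply: leq_trans (leq_card_setU _ _) _; rewrite leq_add2l.
Qed.

Section GroupFacts.

Variable gT : finGroupType.
Implicit Types (G H : {group gT}) (x y : gT).

Lemma subG_card_gt_half G H : H \subset G -> #|G| < 2 * #|H| -> H :=: G.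
Proof.
move=> sHG; rewrite -(Lagrange sHG) => ltG; apply/eqP.
rewrite eqEcard sHG -(Lagrange sHG) /=.
by have := indexg_gt0 G H; move: ltG; case: #|G : H| => [|[|k]] //; nia.
Qed.

Lemma exponent_le2P G : reflect {in G, forall c, c ^+ 2 = 1} (exponent G <= 2).
Proof.
apply: (iffP idP) => [le2 | sq1]; last exact/dvdn_leq/exponentP.
apply/exponentP; have := exponent_gt0 G.
by move: le2; case: (exponent G) => [|[|[|]]].
Qed.

Lemma exponent_gt2 G x : x \in G -> x ^+ 2 != 1 -> 2 < exponent G.
Proof. by move=> Gx; apply: contraR; rewrite -leqNgt => /exponent_le2P/(_ x Gx)->. Qed.

Lemma inverted_commute (f : gT -> gT) x y :
  f (x * y) = f x * f y -> f x = x^-1 -> f y = y^-1 -> f (x * y) = (x * y)^-1 ->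
  commute x y.
Proof. by move=> fM fx fy fxy; apply: invg_inj; rewrite -fxy fM fx fy invMg. Qed.

Lemma inverting_abelian H x : {in H, forall c, c ^ x = c^-1} -> abelian H.
Proof.
move=> invH; apply/centsP => u Hu v Hv.
by apply: (@inverted_commute (conjg^~ x) u v (conjMg u v x)); apply: invH; rewrite ?groupM.
Qed.

Lemma inverted_three_quarters H (f : gT -> gT) :
  {in H &, {morph f : u v / u * v}} ->
  3 * #|H| < 4 * #|[set c in H | f c == c^-1]| ->
  abelian H /\ {in H, forall c, f c = c^-1}.
Proof.
move=> fM; set V := [set c in H | _] => bigV.
have sVH : V \subset H by rewrite /V setIdE subsetIl.
have inV c : (c \in V) = (c \in H) && (f c == c^-1) by rewrite inE.
have cHV : V \subset 'C(H).
  apply/subsetP => u; rewrite inV => /andP[Hu /eqP fu].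
  suff eqCH : 'C_H[u] :=: H by rewrite -sub_cent1 -eqCH subsetIr.
  apply: subG_card_gt_half; first exact: subsetIl.
  have sVuV : u^-1 *: V \subset H.
    by apply/subsetP => w; rewrite mem_lcoset invgK => /(subsetP sVH); rewrite groupMl.
  have sVVC : V :&: u^-1 *: V \subset 'C_H[u].
    apply/subsetP => v /setIP[Vv]; rewrite mem_lcoset invgK => Vuv.
    move: Vv Vuv; rewrite !inV => /andP[Hv /eqP fv] /andP[_ /eqP fuv].
    rewrite inE Hv; apply/cent1P/commute_sym.
    by apply: (@inverted_commute f) => //; rewrite fM.
  have := card_setI_lb sVH sVuV; have := subset_leq_card sVVC.
  by move: bigV; rewrite card_lcoset; card_lia.
have abH : abelian H.
  have eqCH : 'C_H(H) :=: H.
    apply: subG_card_gt_half; first exact: subsetIl.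
    have : V \subset 'C_H(H) by rewrite subsetI sVH cHV.
    by move/subset_leq_card; move: bigV; card_lia.
  by rewrite /abelian -{1}eqCH subsetIr.
split=> //.
have f1 : f 1 = 1 by apply: (mulgI (f 1)); rewrite -fM ?mulg1.
have gV : group_set V.
  apply/group_setP; split=> [|u v]; first by rewrite inV group1 f1 invg1 eqxx.
  rewrite !inV => /andP[Hu /eqP fu] /andP[Hv /eqP fv].
  by rewrite groupM //= fM // fu fv -invMg (centsP abH v Hv u Hu).
have eqVH : V :=: H.
  by apply: (subG_card_gt_half (H := Group gV)) sVH _; move: bigV; card_lia.
by move=> c; rewrite -eqVH inV => /andP[_ /eqP].
Qed.

Lemma index2_sqr_mem G H x :
  H \subset G -> #|G : H| = 2 -> x \in G -> x ^+ 2 \in H.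
Proof.
move=> sHG iH Gx; apply: contraT => x2H.
have xH : x \notin H by apply: contra x2H => xH; rewrite groupX.
have : x ^+ 2 \in H :* x by rewrite (rcoset_index2 sHG) // !inE ?xH ?x2H ?groupX.
by rewrite mem_rcoset expgS expg1 mulgK (negPf xH).
Qed.

Lemma index2_inverting (A : {group gT}) x :
  #|[set: gT] : A| = 2 -> abelian A -> x \notin A -> #[x ^+ 2] = 2 ->
  {in A, forall c, c ^ x = c^-1} -> abelian_exp_gt2 gT \/ gen_dicyclic gT.
Proof.
move=> iA abA xA ox2 invA; have x2A := index2_sqr_mem (subsetT A) iA (in_setT x).
have [/exponent_le2P A2 | expA] := leqP (exponent A) 2; last by right; exists A, x.
left; apply/andP; split; last first.
  by apply: (exponent_gt2 (in_setT x)); rewrite -order_eq1 ox2.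
have cAx : x \in 'C(A).
  apply/centP => c Ac; apply/commute_sym/commgP/conjg_fixP.
  by rewrite invA //; apply/eqP; rewrite eq_invg_mul -expg2 A2.
have eqT : <[x]> <*> A = [set: gT].
  apply: subG_card_gt_half (subsetT _) _.
  have ltAK : A \proper <[x]> <*> A.
    apply/properP; split; first exact: joing_subr.
    by exists x; rewrite // (subsetP (joing_subl _ _)) ?cycle_id.
  have := proper_card ltAK; have := Lagrange (subsetT A).
  by rewrite iA; card_lia.
by rewrite -eqT abelianY cycle_abelian abA centsC cycle_subG.
Qed.

End GroupFacts.

Section InverseRepresentatives.

Variable gT : finGroupType.
Implicit Types x y : gT.

Definition inv_reps : {set gT} := [set x | enum_rank x <= enum_rank x^-1].

Lemma inv_repsVN x : x \notin inv_reps -> x^-1 \in inv_reps.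
Proof. by rewrite !inE invgK -ltnNge => /ltnW. Qed.

Lemma inv_repsV_id x : x \in inv_reps -> x^-1 \in inv_reps -> x^-1 = x.
Proof.
rewrite !inE invgK => le1 le2; apply/enum_rank_inj/val_inj/eqP.
by rewrite eqn_leq le1 le2.
Qed.

Lemma card_inv_reps : (2 * #|inv_reps| = #|[set: gT]| + #|invol_set gT|)%N.
Proof.
have -> : [set: gT] = inv_reps :|: inv_reps^-1.
  apply/setP => x; rewrite in_setU mem_invg in_setT !inE invgK.
  exact/esym/leq_total.
have -> : invol_set gT = inv_reps :&: inv_reps^-1.
  apply/setP => x; rewrite in_setI mem_invg !inE invgK expgS expg1 -eq_invg_mul.
  apply/eqP/andP => [-> | [le1 le2]]; first by split.
  by apply: inv_repsV_id; rewrite inE ?invgK.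
by rewrite cardsUI card_invg addnn mul2n.
Qed.

Definition inv_rep x := if x \in inv_reps then x else x^-1.

Lemma inv_rep_in x : inv_rep x \in inv_reps.
Proof. by rewrite /inv_rep; case: ifPn => // /inv_repsVN. Qed.

Lemma inv_rep_eq x y : inv_rep x = inv_rep y -> x = y \/ x = y^-1.
Proof.
rewrite /inv_rep; case: ifP => _; case: ifP => _ eqxy; [left | right | right | left] => //.
- by rewrite -eqxy invgK.
- exact: invg_inj.
Qed.

End InverseRepresentatives.

Lemma card_acts_le (T : finType) (H : {group {perm T}}) (X : {set T}) :
  (forall x, exists2 y, y \in X & y \in orbit 'P H x) ->
  #|[set S : {set T} | [acts H, on S | 'P]]| <= 2 ^ #|X|.
Proof.
move=> meetX; rewrite -card_powerset.
have injX : {in [set S | [acts H, on S | 'P]] &, injective (fun S => S :&: X)}.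
  move=> S1 S2; rewrite !inE => /acts_act actS1 /acts_act actS2 eqSX.
  apply/setP => x; have [y Xy /orbitP[h Hh xhy]] := meetX x.
  rewrite -(actS1 h Hh) -(actS2 h Hh) /= xhy.
  by have /setP/(_ y) := eqSX; rewrite !in_setI Xy !andbT.
rewrite -(card_in_imset injX); apply: subset_leq_card.
by apply/subsetP => _ /imsetP[S _ ->]; rewrite powersetE subsetIr.
Qed.

Section OrbitMinima.

Variables (T : finType) (H : {group {perm T}}).
Implicit Types x y : T.

Definition orbit_mins : {set T} :=
  [set x | [forall (y | y \in orbit 'P H x), enum_rank x <= enum_rank y]].

Lemma orbit_mins_le x y :
  x \in orbit_mins -> y \in orbit 'P H x -> enum_rank x <= enum_rank y.
Proof. by rewrite inE => /forallP/(_ y)/implyP. Qed.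

Lemma orbit_minsP x : exists2 y, y \in orbit_mins & y \in orbit 'P H x.
Proof.
have [y xHy miny] := arg_minnP (fun y => val (enum_rank y)) (orbit_refl 'P H x).
exists y => //; rewrite inE; apply/forallP => z; apply/implyP => yHz.
by apply: miny; apply: orbit_trans yHz xHy.
Qed.

Lemma orbit_mins_eq x y :
  x \in orbit_mins -> y \in orbit_mins -> y \in orbit 'P H x -> y = x.
Proof.
move=> minx miny xHy; apply/enum_rank_inj/val_inj/eqP.
by rewrite eqn_leq (orbit_mins_le miny) 1?orbit_sym // (orbit_mins_le minx).
Qed.

End OrbitMinima.

Definition fixed_pts (gT : finGroupType) (a : {perm gT}) : {set gT} :=
  [set x | a x == x].
Definition inverted_pts (gT : finGroupType) (a : {perm gT}) : {set gT} :=
  [set x | a x == x^-1].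
Definition moved_noninverted (gT : finGroupType) (a : {perm gT}) : {set gT} :=
  [set x | (a x != x) && (a x != x^-1)].
Definition inverting_pts (gT : finGroupType) (a : {perm gT}) : {set gT} :=
  fixed_pts a :|: [set x in inverted_pts a | [forall c in fixed_pts a, c ^ x == c^-1]].

Section Automorphism.

Variables (gT : finGroupType) (a : {perm gT}).
Hypothesis aAut : a \in Aut [set: gT].

Local Notation n := #|[set: gT]|.
Local Notation A := (fixed_pts a).
Local Notation I := (inverted_pts a).
Local Notation D := (moved_noninverted a).
Local Notation W := (inverting_pts a).

Lemma autTM : {morph a : x y / x * y}.
Proof. by move=> x y; apply: (morphicP (Aut_morphic aAut)); rewrite inE. Qed.

Lemma autT1 : a 1 = 1.
Proof. by apply: (mulgI (a 1)); rewrite -autTM !mulg1. Qed.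

Lemma autTV x : a x^-1 = (a x)^-1.
Proof. by apply: (mulgI (a x)); rewrite -autTM !mulgV autT1. Qed.

Fact fixed_pts_group_set : group_set A.
Proof.
by apply/group_setP; split=> [|x y]; rewrite !inE ?autT1 // autTM => /eqP-> /eqP->.
Qed.
Canonical fixed_pts_group := Group fixed_pts_group_set.

Lemma card_fixed_pts : a != 1 -> 2 * #|A| <= n.
Proof.
apply: contraR; rewrite -ltnNge => /(subG_card_gt_half (subsetT _)) AT.
by apply/eqP/permP => x; have /[!(inE, perm1)] /eqP : x \in A by rewrite AT inE.
Qed.

Lemma inverted_mul_fixed x c :
  x \in I -> c \in A -> (x * c \in I) = (c ^ x == c^-1).
Proof.
rewrite !inE autTM => /eqP-> /eqP->; rewrite invMg conjgE mulgA.
by rewrite -(inj_eq (mulIg x)) mulgKV.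
Qed.

Lemma inverting_ptsP x :
  x \in W -> x \notin A -> x \in I /\ {in A, forall c, c ^ x = c^-1}.
Proof.
rewrite !inE => /orP[-> // | /andP[xI /forallP invA]] _.
by split=> // c cA; have /implyP/(_ cA)/eqP := invA c.
Qed.

(* Otherwise some x = z c0 inverts more than 3/4 of A by conjugation, hence all
   of A, and then z = x c0^-1 lies in W. *)
Lemma card_coset_moved_noninverted z :
  z \notin W -> #|A| <= 4 * #|[set c in A | z * c \in D]|.
Proof.
apply: contraR; rewrite -ltnNge => smallD.
have [zA | zA] := boolP (z \in A); first by rewrite inE zA.
set P := [set c in A | z * c \in I].
have bigP : 3 * #|A| < 4 * #|P|.
  suff : #|A| <= #|P| + #|[set c in A | z * c \in D]| by move: smallD; card_lia.
  apply: leq_trans (leq_card_setU _ _); apply/subset_leq_card/subsetP => c Ac.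
  have zcA : z * c \notin A by rewrite groupMr.
  by move: Ac zcA; rewrite !inE => -> ->; case: eqP.
have [c0 /setIdP[Ac0 zc0I]] : exists c0, c0 \in P.
  by apply/card_gt0P; move: bigP; card_lia.
set x := z * c0.
have [abA invA] : abelian A /\ {in A, forall c, c ^ x = c^-1}.
  apply: inverted_three_quarters => [u v _ _ | ]; first exact: conjMg.
  have sPV : c0^-1 *: P \subset [set c in A | c ^ x == c^-1].
    apply/subsetP => c; rewrite mem_lcoset invgK => /setIdP[Ac0c zc0cI].
    have Ac : c \in A by rewrite -(mulKg c0 c) groupMl ?groupV.
    by rewrite inE Ac -inverted_mul_fixed // /x -mulgA.
  by have := subset_leq_card sPV; rewrite card_lcoset; move: bigP; card_lia.
have Ac0V : c0^-1 \in A by rewrite groupV.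
apply/setUP; right; apply/setIdP; split.
  by rewrite -(mulgK c0 z) inverted_mul_fixed ?invA ?invgK.
apply/forall_inP => c Ac; have cc0 : c ^ c0^-1 = c by apply/conjg_fixP/commgP/(centsP abA).
by rewrite -(mulgK c0 z) conjgM invA // conjVg cc0.
Qed.

Lemma card_not_inverting_pts : #|~: W| <= 4 * #|D|.
Proof.
have cardDc c : #|[set z | z * c \in D]| = #|D|.
  by rewrite -(card_rcoset D c^-1); apply: eq_card => z; rewrite inE mem_rcoset invgK.
have sum_card : (\sum_(z : gT) #|[set c in A | (z * c)%g \in D]| = #|A| * #|D|)%N.
  under eq_bigr => z _ do rewrite -sum1dep_card big_mkcondr.
  rewrite exchange_big /= -sum_nat_const; apply: eq_bigr => c _.
  by rewrite -(cardDc c) -sum1dep_card [RHS]big_mkcond.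
have : #|~: W| * #|A| <= 4 * #|D| * #|A|.
  rewrite -mulnA [(#|D| * _)%N]mulnC -sum_card big_distrr -sum_nat_const /= big_mkcond.
  by apply: leq_sum => z _; case: ifPn => // /[1!in_setC] /card_coset_moved_noninverted.
by rewrite leq_pmul2r ?cardG_gt0.
Qed.

Lemma inverting_pts_central x :
  exponent A <= 2 -> 5 * n < 6 * #|W| -> x \in W -> x \notin A ->
  x \in 'C([set: gT]).
Proof.
move=> /exponent_le2P A2 bigW xW xA; have [xI invA] := inverting_ptsP xW xA.
have invK c : c \in A -> c^-1 = c by move=> Ac; apply/eqP; rewrite eq_invg_mul -expg2 A2.
suff eqC : 'C[x] :=: [set: gT] by rewrite -sub_cent1 eqC.
apply: subG_card_gt_half (subsetT _) _.
have sWC : W :&: x^-1 *: W \subset 'C[x].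
  apply/subsetP => y /setIP[yW]; rewrite mem_lcoset invgK => xyW; apply/cent1P.
  have [yA | yA] := boolP (y \in A).
    by apply/commgP/conjg_fixP; rewrite invA ?invK.
  have [xyA | xyA] := boolP (x * y \in A).
    by have := invA _ xyA; rewrite invK // conjgE -mulgA mulKg; apply.
  have [yI _] := inverting_ptsP yW yA; have [xyI _] := inverting_ptsP xyW xyA.
  move: xI yI xyI; rewrite !inE => /eqP ax /eqP ay /eqP axy.
  by apply/commute_sym/(inverted_commute (autTM x y)).
have := card_setI_lb (subsetT W) (subsetT (x^-1 *: W)); have := subset_leq_card sWC.
by rewrite card_lcoset; move: bigW; card_lia.
Qed.

Lemma fixed_pts_exponent_le2 x :
  x \in W -> x \notin A -> 3 * #|A| <= n -> 5 * n < 6 * #|W| -> exponent A <= 2.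
Proof.
move=> xW xA A3 bigW; apply/exponent_le2P => c Ac; apply/eqP.
apply: contraTT bigW => c2n1; rewrite -leqNgt.
have sWA : W :&: x^-1 *: W \subset A :|: x^-1 *: A.
  apply/subsetP => y /setIP[yW]; rewrite mem_lcoset invgK => xyW.
  rewrite in_setU mem_lcoset invgK; apply/norP => -[yA xyA]; case/negP: c2n1.
  have [_ invAy] := inverting_ptsP yW yA; have [_ invAxy] := inverting_ptsP xyW xyA.
  have [_ invAx] := inverting_ptsP xW xA.
  have cV : c^-1 = c by rewrite -invAxy // conjgM invAx // conjVg invAy // invgK.
  by rewrite expg2 -{1}cV mulVg.
have := card_setI_lb (subsetT W) (subsetT (x^-1 *: W)); have := subset_leq_card sWA.
have := (leq_card_setU A (x^-1 *: A)).1.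
by rewrite !card_lcoset; move: A3; card_lia.
Qed.

Lemma inverting_pts_abelian :
  3 * #|A| <= n -> 5 * n < 6 * #|W| -> abelian [set: gT].
Proof.
move=> A3 bigW.
have [x0 x0W x0A] : exists2 x0, x0 \in W & x0 \notin A.
  by apply/subsetPn/negP => /subset_leq_card; move: A3 bigW; card_lia.
have A2 := fixed_pts_exponent_le2 x0W x0A A3 bigW.
have sWC : W :\: A \subset 'C([set: gT]).
  by apply/subsetP => x /setDP[xW xA]; apply: inverting_pts_central.
suff eqC : 'C([set: gT]) :=: [set: gT] by rewrite /abelian eqC.
apply: subG_card_gt_half (subsetT _) _.
have := subset_leq_card sWC; have := subset_leq_card (subsetIr W A).
by rewrite cardsD; move: A3 bigW; card_lia.
Qed.

Theorem card_moved_noninverted :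
  a != 1 -> ~ abelian_exp_gt2 gT -> ~ gen_dicyclic gT -> n <= 24 * #|D|.
Proof.
move=> a1 nab ndic; rewrite leqNgt; apply/negP => smallD.
have bigW : 5 * n < 6 * #|W|.
  have := card_not_inverting_pts; have := cardsC W.
  by move: smallD; rewrite cardsT; card_lia.
have A2 := card_fixed_pts a1.
have [x0 x0W x0A] : exists2 x0, x0 \in W & x0 \notin A.
  by apply/subsetPn/negP => /subset_leq_card; move: A2 bigW; card_lia.
have [/[!inE] /eqP ax0 invA] := inverting_ptsP x0W x0A.
have x0sq : x0 ^+ 2 != 1.
  by apply: contra x0A => /eqP x2; rewrite inE ax0 eq_invg_mul -expg2 x2.
have [iA | iA] := eqVneq #|[set: gT] : A| 2.
  have ox2 : #[x0 ^+ 2] = 2.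
    apply: nt_prime_order => //; apply/eqP.
    have := index2_sqr_mem (subsetT A) iA (in_setT x0); rewrite inE expg2 autTM ax0 -invMg.
    by rewrite eq_invg_mul -expg2.
  by case: (index2_inverting iA (inverting_abelian invA) x0A ox2 invA).
apply: nab; apply/andP; split; last exact: exponent_gt2 (in_setT x0) x0sq.
apply: inverting_pts_abelian bigW.
have := Lagrange (subsetT A); move: A2 iA; set i := #|_ : _|.
by case: i => [|[|[|i]]] //; card_lia.
Qed.

End Automorphism.

Definition invg_perm (gT : finGroupType) : {perm gT} := perm (@invg_inj gT).

Lemma invg_permE (gT : finGroupType) (x : gT) : invg_perm gT x = x^-1.
Proof. exact: permE. Qed.

Definition inv_stable_sets (gT : finGroupType) (a : {perm gT}) : {set {set gT}} :=
  [set S : {set gT} | (S^-1 == S) && [forall x, (a x \in S) == (x \in S)]].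

Section StableSets.

Variables (gT : finGroupType) (a : {perm gT}).
Hypothesis aAut : a \in Aut [set: gT].

Local Notation H := <<[set a; invg_perm gT]>>%G.
Local Notation T := (inv_reps gT).
Local Notation M := (orbit_mins H).
Local Notation D := (moved_noninverted a).

Lemma inv_stable_sets_acts : inv_stable_sets a \subset [set S | [acts H, on S | 'P]].
Proof.
apply/subsetP => S; rewrite !inE => /andP[/eqP SV /forallP aS].
rewrite gen_subG; apply/subsetP => h /set2P[]->; apply/astabsP => x /=; rewrite apermE.
  exact/eqP/aS.
by rewrite invg_permE -mem_invg SV.
Qed.

Lemma orbit_invg x : x^-1 \in orbit 'P H x.
Proof. by rewrite -invg_permE; apply/mem_orbit/mem_gen/set2P; right. Qed.

Lemma orbit_aut x : a x \in orbit 'P H x.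
Proof. by apply/mem_orbit/mem_gen/set2P; left. Qed.

Lemma orbit_mins_sub : M \subset T.
Proof. by apply/subsetP => x minx; rewrite inE (orbit_mins_le minx (orbit_invg x)). Qed.

Lemma moved_noninvertedV x : x \in D -> x^-1 \in D.
Proof. by rewrite !inE (autTV aAut) invgK (inj_eq invg_inj) eqg_invLR. Qed.

Lemma moved_noninverted_aut x : x \in D -> a x \in D.
Proof. by rewrite !inE -(autTV aAut) !(inj_eq perm_inj). Qed.

Local Notation g x := (inv_rep (a x)).

Lemma inv_rep_aut_orbit x : g x \in orbit 'P H x.
Proof.
rewrite /inv_rep; case: ifP => _; first exact: orbit_aut.
exact: orbit_trans (orbit_invg _) (orbit_aut x).
Qed.

Lemma inv_rep_aut_inj : {in T &, injective (fun x => g x)}.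
Proof.
move=> x y xT yT /inv_rep_eq[/perm_inj // | ].
by rewrite -(autTV aAut) => /perm_inj xyV; move: xT; rewrite xyV; apply: inv_repsV_id.
Qed.

Lemma card_moved_noninverted_reps : #|D| <= 2 * #|D :&: T|.
Proof.
have sD : D \subset (D :&: T) :|: (D :&: T)^-1.
  apply/subsetP => x Dx; rewrite in_setU mem_invg !in_setI Dx moved_noninvertedV //=.
  by case: (boolP (x \in T)) => // /inv_repsVN ->; rewrite orbT.
apply: leq_trans (subset_leq_card sD) _.
by rewrite cardsU card_invg mul2n -addnn leq_subr.
Qed.

Lemma card_moved_noninverted_mins : #|D :&: T :&: M| <= #|D :&: T :\: M|.
Proof.
have injg : {in D :&: T :&: M &, injective (fun x => g x)}.
  by move=> x y /setIP[/setIP[_ xT] _] /setIP[/setIP[_ yT] _]; apply: inv_rep_aut_inj.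
rewrite -(card_in_imset injg); apply/subset_leq_card/subsetP => y.
case/imsetP=> x /setIP[/setIP[Dx xT] minx] ->; rewrite in_setD !in_setI inv_rep_in andbT.
have Dgx : g x \in D.
  by rewrite /inv_rep; case: ifP => _; [|apply: moved_noninvertedV]; apply: moved_noninverted_aut.
rewrite Dgx andbT; apply: contraTN Dx => ming.
rewrite !inE negb_and !negbK; move: (orbit_mins_eq minx ming (inv_rep_aut_orbit x)).
rewrite /inv_rep; case: ifP => _; first by move=> ->; rewrite eqxx.
by move/(canRL invgK)->; rewrite eqxx orbT.
Qed.

Lemma card_moved_noninverted_le : #|D| <= 4 * #|T :\: M|.
Proof.
have := card_moved_noninverted_reps; have := card_moved_noninverted_mins.
have := cardsID M (D :&: T); have := subset_leq_card (setSD M (subsetIr D T)).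
by card_lia.
Qed.

Theorem card_inv_stable_sets :
  exists2 m, #|inv_stable_sets a| <= 2 ^ m & 4 * m + #|D| <= 4 * #|T|.
Proof.
exists #|M|.
  apply: leq_trans (subset_leq_card inv_stable_sets_acts) (card_acts_le _).
  exact: orbit_minsP.
have := card_moved_noninverted_le; have := cardsID M T.
by rewrite (setIidPr orbit_mins_sub); card_lia.
Qed.

End StableSets.

Section RegularNormaliser.

Variable gT : finGroupType.
Implicit Types (s : {perm gT}) (x y : gT).

Lemma rregE x y : rreg x y = y * x.
Proof. exact: permE. Qed.

Lemma normaliser_rreg_mul s x y :
  s \in 'N(rregR gT) -> s (x * y) = s x * (s 1)^-1 * s y.
Proof.
move=> Ns; have /imsetP[z _ eqz] : rreg y ^ s \in rregR gT by rewrite memJ_norm ?imset_f.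
have sz u : s (s^-1 u * y) = u * z.
  by have /permP/(_ u) := eqz; rewrite /conjg !permM !rregE.
by rewrite -(permK s x) sz -(mulKg (s 1) z) -sz permK mul1g mulgA !permKV.
Qed.

Lemma normaliser_rreg_Aut s : s \in 'N(rregR gT) -> s * rreg (s 1)^-1 \in Aut [set: gT].
Proof.
move=> Ns; rewrite inE; apply/andP; split; first by apply/subsetP => x; rewrite inE.
apply/morphicP => x y _ _.
by rewrite !permM !rregE (normaliser_rreg_mul _ _ Ns) !mulgA.
Qed.

Lemma bad_sets_stable S :
  S \in bad_sets gT -> exists2 a, a \in (Aut [set: gT])^# & S \in inv_stable_sets a.
Proof.
rewrite inE => /andP[SV /properP[_ [s /setIP[CayS Ns] Rs]]].
exists (s * rreg (s 1)^-1); last first.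
  rewrite inE SV; apply/forallP => x; rewrite permM rregE.
  by move: CayS; rewrite inE => /forallP/(_ 1)/forallP/(_ x); rewrite invg1 mulg1 eq_sym.
rewrite in_setD1 normaliser_rreg_Aut // andbT; apply: contra Rs => /eqP s1.
apply/imsetP; exists (s 1) => //; apply/permP => x.
have /permP/(_ x) := s1; rewrite permM rregE perm1 => sx.
by rewrite rregE -{2}sx mulgKV.
Qed.

End RegularNormaliser.

Section AutomorphismCount.

Variable gT : finGroupType.

Lemma gen_seq_small (G : {group gT}) :
  exists2 s : seq gT, <<[set:: s]>> = G & 2 ^ size s <= #|G|.
Proof.
suff grow k (s : seq gT) : <<[set:: s]>> \subset G -> #|G| <= k + #|<<[set:: s]>>| ->
    2 ^ size s <= #|<<[set:: s]>>| -> exists2 s', <<[set:: s']>> = G & 2 ^ size s' <= #|G|.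
  by apply: (grow #|G| [::]); rewrite ?set_nil ?gen0 ?sub1G ?cards1 ?leq_addr.
elim: k s => [|k IHk] s sG leG le2s.
  by exists s; [apply/eqP; rewrite eqEcard sG | apply: leq_trans le2s (subset_leq_card sG)].
have [eqG | neG] := eqVneq <<[set:: s]>> G.
  by exists s; rewrite // -eqG.
have [x Gx notsx] : exists2 x, x \in G & x \notin <<[set:: s]>>.
  by apply/subsetPn; apply: contra neG => sGs; rewrite eqEsubset sG.
have sss : <<[set:: s]>> \subset <<[set:: x :: s]>> by rewrite genS // set_cons subsetUr.
have ltss : 2 * #|<<[set:: s]>>| <= #|<<[set:: x :: s]>>|.
  rewrite leqNgt; apply: contra notsx => /(subG_card_gt_half sss) ->.
  by rewrite mem_gen // set_cons setU11.
apply: (IHk (x :: s)).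
- by rewrite gen_subG set_cons subUset sub1set Gx -gen_subG.
- by have := cardG_gt0 <<[set:: s]>>; move: leG ltss; card_lia.
- by rewrite /= expnS; apply: leq_trans ltss; rewrite leq_mul2l.
Qed.

Lemma eq_in_Aut_gen (A : {set gT}) (a b : {perm gT}) :
  a \in Aut [set: gT] -> b \in Aut [set: gT] -> {in A, a =1 b} -> {in <<A>>, a =1 b}.
Proof.
move=> aAut bAut eqab; have abAut : a * b^-1 \in Aut [set: gT] by rewrite groupM ?groupV.
suff sAF : <<A>> \subset fixed_pts_group abAut.
  by move=> x /(subsetP sAF); rewrite inE permM => /eqP/(canRL (permKV b)).
by rewrite gen_subG; apply/subsetP => x Ax; rewrite inE permM eqab ?permK.
Qed.

Lemma card_Aut_gen (s : seq gT) :
  <<[set:: s]>> = [set: gT] -> #|Aut [set: gT]| <= #|gT| ^ size s.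
Proof.
move=> gen_s; pose img (a : {perm gT}) := [ffun i : 'I_(size s) => a (nth 1 s i)].
have inj_img : {in Aut [set: gT] &, injective img}.
  move=> a b aAut bAut eqab; apply: (eq_Aut aAut bAut) => x _.
  apply: (eq_in_Aut_gen (A := [set:: s]) aAut bAut); last by rewrite gen_s inE.
  move=> y /[!inE] sy; have ys : index y s < size s by rewrite index_mem.
  by have /ffunP/(_ (Ordinal ys)) := eqab; rewrite !ffunE /= nth_index.
rewrite -(card_in_imset inj_img) -[X in _ <= _ ^ X](card_ord (size s)) -card_ffun -cardsT.
exact/subset_leq_card/subsetT.
Qed.

End AutomorphismCount.

Section RealBounds.

Local Open Scope R_scope.

Lemma INR_expn (m k : nat) : INR (m ^ k) = INR m ^ k.
Proof. by elim: k => [|k IHk] //; rewrite expnS mulnE mult_INR IHk. Qed.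

Lemma INR_expn2_le (m : nat) (e : R) : INR m <= e -> INR (2 ^ m) <= Rpower 2 e.
Proof.
move=> le_me; rewrite INR_expn -Rpower_pow /=; last lra.
by apply: Rle_Rpower => //; lra.
Qed.

Lemma INR_expn_log2_le (n d : nat) :
  (0 < n)%N -> (2 ^ d <= n)%N -> INR (n ^ d) <= Rpower 2 (Rsqr (ln (INR n) / ln 2)).
Proof.
move=> n_gt0 le2d.
have ln2_gt0 : 0 < ln 2 by rewrite -ln_1; apply: ln_increasing; lra.
have nR_gt0 : 0 < INR n by apply/lt_0_INR/ltP.
set L := ln (INR n) / ln 2.
have nE : Rpower 2 L = INR n.
  by rewrite /Rpower /L Rmult_assoc Rinv_l ?Rmult_1_r ?exp_ln //; lra.
have d_le_L : INR d <= L.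
  rewrite /L; apply: (Rmult_le_reg_r (ln 2)) => //.
  rewrite Rmult_assoc Rinv_l ?Rmult_1_r -?ln_pow; try lra.
  have : 2 ^ d <= INR n by rewrite -[2]/(INR 2) -INR_expn; apply/le_INR/leP.
  case/Rle_lt_or_eq_dec => [lt2n | ->]; last lra.
  by apply/Rlt_le/ln_increasing => //; apply: pow_lt; lra.
have L_ge0 : 0 <= L by apply: Rle_trans d_le_L; apply: pos_INR.
rewrite INR_expn -Rpower_pow // -nE Rpower_mult; apply: Rle_Rpower; first lra.
by rewrite /Rsqr; apply: Rmult_le_compat_l.
Qed.

End RealBounds.

(* [floor (c(R) - |R|/96)], computed in [nat]. *)
Definition stable_exponent (gT : finGroupType) : nat :=
  (96 * #|inv_reps gT| - #|[set: gT]|) %/ 96.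

Lemma INR_stable_exponent (gT : finGroupType) :
  Rle (INR (stable_exponent gT)) (Rminus (cR gT) (Rdiv (INR #|[set: gT]|) 96)).
Proof.
have le_n : (#|[set: gT]| <= 96 * #|inv_reps gT|)%N.
  by have := card_inv_reps gT; card_lia.
have := le_INR _ _ (elimT leP (leq_divM (96 * #|inv_reps gT| - #|[set: gT]|) 96)).
rewrite /stable_exponent /cR -card_inv_reps mult_INR minus_INR; last exact/leP.
rewrite !mult_INR /=; lra.
Qed.

Lemma card_bad_sets_le (gT : finGroupType) :
  ~ abelian_exp_gt2 gT -> ~ gen_dicyclic gT ->
  #|bad_sets gT| <= #|Aut [set: gT]| * 2 ^ stable_exponent gT.
Proof.
move=> nab ndic.
have stable_le a : a \in (Aut [set: gT])^# -> #|inv_stable_sets a| <= 2 ^ stable_exponent gT.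
  case/setD1P=> a1 aAut; have [k le_k le4k] := card_inv_stable_sets aAut.
  apply: leq_trans le_k _; rewrite leq_exp2l // leq_divRL //.
  by have := card_moved_noninverted aAut a1 nab ndic; move: le4k; card_lia.
have sub : bad_sets gT \subset \bigcup_(a in (Aut [set: gT])^#) inv_stable_sets a.
  by apply/subsetP => S /bad_sets_stable[a Aa SA]; apply/bigcupP; exists a.
apply: leq_trans (subset_leq_card sub) (leq_trans (card_bigcup_le _ _) _).
apply: (@leq_trans (\sum_(a in (Aut [set: gT])^#) 2 ^ stable_exponent gT)).
  exact: leq_sum.
by rewrite sum_nat_const leq_mul2r subset_leq_card ?subD1set ?orbT.
Qed.

Theorem proposition2p5 (gT : finGroupType) :
  ~ abelian_exp_gt2 gT -> ~ gen_dicyclic gT ->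
  Rle (INR #|bad_sets gT|)
      (Rpower 2 (Rplus (Rminus (cR gT) (Rdiv (INR #|[set: gT]|) 96))
                       (Rsqr (Rdiv (ln (INR #|[set: gT]|)) (ln 2))))).
Proof.
move=> nab ndic; have [s gen_s size_s] := gen_seq_small [set: gT]%G.
apply: Rle_trans (le_INR _ _ (elimT leP (card_bad_sets_le nab ndic))) _.
rewrite mult_INR Rpower_plus Rmult_comm.
apply: Rmult_le_compat; try exact: pos_INR.
  exact/INR_expn2_le/INR_stable_exponent.
apply: Rle_trans (le_INR _ _ (elimT leP (card_Aut_gen gen_s))) _.
by rewrite -cardsT; apply: INR_expn_log2_le; rewrite ?cardG_gt0.
Qed.
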